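(* Let $S$ be a finite nonempty set of positive integers and $s=\max S$. The minimum density of a dominating set in the distance graph $G(S)$ is achieved by a periodic dominating set with period at most $(2s)2^{2s}$.
   Context: The distance graph $G(S)$ has vertex set $\mathbb{Z}$, with $i,j$ adjacent iff $|i-j|\in S$. A set $D\subseteq\mathbb{Z}$ is dominating if every integer is in $D$ or adjacent to an element of $D$. The density of $A\subseteq\mathbb{Z}$ is $\delta(A)=\limsup_{N\to\infty}\frac{|A\cap[-N,N]|}{2N+1}$. A set $A$ is periodic with period $p$ if $A+p=A$. *)

From mathcomp Require Import all_boot all_order all_algebra.
From mathcomp Require Import all_classical all_reals all_analysis.
Set Implicit Arguments. Unset Strict Implicit. Unset Printing Implicit Defensive.
Import Order.TTheory GRing.Theory Num.Theory.
Local Open Scope ring_scope.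

(* Subsets of Z are represented as boolean predicates int -> bool
   (classically every subset is of this form). *)

Definition adj (S : seq nat) (i j : int) : bool := (absz (i - j))%N \in S.

Definition dominating (S : seq nat) (D : int -> bool) : Prop :=
  forall x : int, D x \/ exists y : int, D y /\ adj S x y.

Definition count_sym (A : int -> bool) (N : nat) : nat :=
  (\sum_(i < (2 * N).+1) (A ((i : nat)%:Z - (N : nat)%:Z)%R : nat))%N.

Definition density (R : realType) (A : int -> bool) : \bar R :=
  limn_esup (fun N : nat => ((count_sym A N)%:R / ((2 * N).+1)%:R : R)%:E).

Definition periodic_set (A : int -> bool) (p : nat) : Prop :=
  forall x : int, A (x + p%:Z) = A x.

From mathcomp Require Import all_boot all_order all_algebra.
From mathcomp Require Import all_classical all_reals all_analysis.
From mathcomp Require Import zify.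
Import Order.TTheory GRing.Theory Num.Theory.
Local Open Scope ring_scope.

(* Whether a point is dominated depends only on the set within distance s of
   it.  Take, among the dominating sets of period at most 2^(2s), one whose
   density c0/p0 is minimal.  Given any dominating set D' and a window of
   length L > 2^(2s) + 2s, two of its first 2^(2s) + 1 subwords of length 2s
   coincide, at positions i < j <= 2^(2s).  Repeating the block [i, j)
   periodically gives a dominating set of period j - i, so the block contains
   at least c0 (j - i) / p0 points of D'; excising the block leaves a shorter
   window that is still dominated in its interior.  Induction on L shows that
   D' has at least c0 L / p0 - O(1) points in every window of length L,
   whence density D' >= c0 / p0. *)

Definition dominatedb (S : seq nat) (D : int -> bool) (x : int) : bool :=
  D x || has (fun k : nat => D (x + k%:Z) || D (x - k%:Z)) S.

Lemma dominatingP S D : dominating S D <-> forall x, dominatedb S D x.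
Proof.
split=> domD x.
- rewrite /dominatedb; case: (domD x) => [->//|[y [Dy]]]; rewrite /adj => xyS.
  apply/orP; right; apply/hasP; exists `|x - y|%N => //.
  case: (lerP 0 (x - y)) => xy.
  + by rewrite (_ : x - `|x - y|%N%:Z = y) ?Dy ?orbT //; lia.
  + by rewrite (_ : x + `|x - y|%N%:Z = y) ?Dy //; lia.
- case/orP: (domD x) => [->|/hasP [k kS /orP [Dy|Dy]]]; [by left| |]; right.
  + by exists (x + k%:Z); split => //; rewrite /adj (_ : absz _ = k) //; lia.
  + by exists (x - k%:Z); split => //; rewrite /adj (_ : absz _ = k) //; lia.
Qed.

Definition window_count (w : int -> bool) (L : nat) : nat :=
  (\sum_(i < L) (w i%:Z : nat))%N.

Definition weight (p : nat) (g : nat -> bool) : nat := (\sum_(k < p) (g k : nat))%N.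

Definition excise (w : int -> bool) (i j : nat) (x : int) : bool :=
  if x < i%:Z then w x else w (x + (j - i)%N%:Z).

Definition periodic_ext (p : nat) (g : nat -> bool) (x : int) : bool :=
  g (absz (x %% p%:Z)%Z).

Lemma repeated_subword (s : nat) (w : int -> bool) :
  exists i j : nat, [/\ (i < j)%N, (j <= 2 ^ (2 * s))%N &
    forall k, (k < 2 * s)%N -> w (i + k)%N%:Z = w (j + k)%N%:Z].
Proof.
pose n := (2 ^ (2 * s))%N.
pose subword (t : 'I_n.+1) : {ffun 'I_(2 * s) -> bool} :=
  [ffun k : 'I_(2 * s) => w (t + k)%N%:Z].
have : ~~ injectiveb subword.
  apply/negP => /injectiveP /leq_card.
  by rewrite card_ffun card_bool !card_ord ltnn.
case/injectivePn => x [y xy eq_xy].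
have eq_w k : (k < 2 * s)%N -> w (x + k)%N%:Z = w (y + k)%N%:Z.
  by move=> ks; have := congr1 (fun f : {ffun _ -> bool} => f (Ordinal ks)) eq_xy; rewrite !ffunE.
have xn := ltn_ord x; have yn := ltn_ord y.
case: (ltngtP x y) => [lt_xy|lt_yx|/val_inj eqxy]; last by rewrite eqxy eqxx in xy.
- by exists x, y.
- by exists y, x; split => // k ks; rewrite eq_w.
Qed.

Lemma window_count_excise w L i j : (i < j)%N -> (j <= L)%N ->
  window_count w L =
    (window_count (excise w i j) (L - (j - i)) + weight (j - i) (fun k => w (i + k)%N%:Z))%N.
Proof.
move=> ij jL.
have count_nat v M : window_count v M = (\sum_(0 <= x < M) (v x%:Z : nat))%N.
  by rewrite /window_count big_mkord.
rewrite !count_nat.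
rewrite (@big_cat_nat _ _ _ i 0 (L - (j - i))) //=; last lia.
rewrite (@big_cat_nat _ _ _ i 0 L) //=; last lia.
rewrite (@big_cat_nat _ _ _ j i L) ?(ltnW ij) //=.
have -> : (\sum_(0 <= x < i) (excise w i j x%:Z : nat) = \sum_(0 <= x < i) (w x%:Z : nat))%N.
  by apply: eq_big_nat => x /andP [_ xi]; rewrite /excise ltz_nat xi.
have -> : (\sum_(i <= x < L - (j - i)) (excise w i j x%:Z : nat)
          = \sum_(j <= x < L) (w x%:Z : nat))%N.
  rewrite [in RHS](_ : j = i + (j - i))%N ?big_addn; last lia.
  rewrite [in RHS]big_nat_cond [in LHS]big_nat_cond.
  apply: eq_bigr => x /andP [/andP [ix xL] _].
  by rewrite /excise ifF ?ltz_nat; [congr (nat_of_bool (w _)); lia | lia].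
have -> : (weight (j - i) (fun k => w (i + k)%N%:Z) = \sum_(i <= x < j) (w x%:Z : nat))%N.
  rewrite [in RHS](_ : i = 0 + i)%N // big_addn big_mkord /weight.
  by apply: eq_bigr => x _; congr (nat_of_bool (w _)); lia.
lia.
Qed.

Lemma absz_modz_lt p (x : int) : (0 < p)%N -> (absz (x %% p%:Z)%Z < p)%N.
Proof.
move=> p0; have : 0 <= (x %% p%:Z)%Z by apply: modz_ge0; lia.
have : (x %% p%:Z)%Z < p%:Z by apply: ltz_pmod; lia.
lia.
Qed.

Lemma periodic_extDM p g (m x : int) :
  periodic_ext p g (x + m * p%:Z) = periodic_ext p g x.
Proof. by rewrite /periodic_ext addrC modzMDl. Qed.

Lemma periodic_ext_small p g (t : nat) : (t < p)%N -> periodic_ext p g t%:Z = g t.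
Proof. by move=> tp; rewrite /periodic_ext modz_small //; apply/andP; split; lia. Qed.

Lemma eq_periodic_ext p g g' : (0 < p)%N -> (forall k, (k < p)%N -> g k = g' k) ->
  periodic_ext p g = periodic_ext p g'.
Proof. by move=> p0 eq_g; apply/funext => x; rewrite /periodic_ext eq_g ?absz_modz_lt. Qed.

Lemma window_count_periodic_ext p g (b : int) : (0 < p)%N ->
  window_count (fun x => periodic_ext p g (x + b)) p = weight p g.
Proof.
move=> p0; pose r (k : 'I_p) : 'I_p := Ordinal (@absz_modz_lt p (k%:Z + b) p0).
have r_inj : injective r.
  move=> k k' /(congr1 val) /= /eqP.
  rewrite -eqz_nat !gez0_abs ?modz_ge0 -?lt0n ?p0 // eqz_modDr.
  by rewrite !modz_small ?ltz_nat ?ltn_ord ?lez_nat // eqz_nat => /eqP/val_inj.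
by rewrite /window_count /weight [RHS](reindex_inj r_inj).
Qed.

Lemma window_count_periodic_ext_mul p g (a : int) (m : nat) : (0 < p)%N ->
  window_count (fun x => periodic_ext p g (x + a)) (m * p) = (m * weight p g)%N.
Proof.
move=> p0; elim: m => [|m IH]; first by rewrite /window_count mul0n big_ord0.
rewrite !mulSnr -IH /window_count big_split_ord /=; congr addn.
rewrite -(window_count_periodic_ext p g (a + (m * p)%N%:Z) p0).
by apply: eq_bigr => k _; congr (nat_of_bool (periodic_ext _ _ _)); lia.
Qed.

Lemma window_count_periodic_ext_ub p g (a : int) L : (0 < p)%N ->
  (window_count (fun x => periodic_ext p g (x + a)) L * p
     <= weight p g * L + weight p g * p)%N.
Proof.
move=> p0; set M := (L %/ p).+1.
have LM : (L <= M * p)%N by rewrite /M mulSn; have := leq_divM L p; lia.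
have : (window_count (fun x => periodic_ext p g (x + a)) L
        <= window_count (fun x => periodic_ext p g (x + a)) (M * p))%N.
  rewrite /window_count -!(big_mkord xpredT (fun i => (periodic_ext p g (i%:Z + a) : nat))).
  by rewrite [X in (_ <= X)%N](@big_cat_nat _ _ _ L) //= leq_addr.
rewrite window_count_periodic_ext_mul // => count_le.
have := leq_divM L p; rewrite /M in count_le; nia.
Qed.

Lemma exists_min_periodic_dominating S n : (0 < n)%N ->
  exists p0 g0, [/\ (0 < p0)%N, (p0 <= n)%N, dominating S (periodic_ext p0 g0) &
    forall p g, (0 < p)%N -> (p <= n)%N -> dominating S (periodic_ext p g) ->
      (weight p0 g0 * p <= weight p g * p0)%N].
Proof.
(* A candidate is a period together with the first n values of its pattern;
   there are finitely many, so one of minimal density exists. *)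
move=> n0; pose T := ('I_n.+1 * n.-tuple bool)%type.
pose tup (g : nat -> bool) : n.-tuple bool := [tuple g i | i < n].
have eq_tup g p : (p <= n)%N -> forall k, (k < p)%N -> nth false (tup g) k = g k.
  move=> pn k kp; have kn : (k < n)%N by lia.
  by rewrite (nth_mktuple _ _ (Ordinal kn)).
pose good (x : T) := (0 < x.1)%N && `[< dominating S (periodic_ext x.1 (nth false x.2)) >].
pose ratio (x : T) := ((weight x.1 (nth false x.2))%:R / (x.1 : nat)%:R : rat).
pose full : T := (Ordinal (n0 : (1 < n.+1)%N), tup (fun _ => true)).
have good_full : good full.
  apply/andP; split => //; apply/asboolP/dominatingP => x.
  by rewrite /dominatedb /periodic_ext modz1 (eq_tup _ 1%N n0).
case: (@arg_minP _ _ T full good ratio good_full) => x0 /andP [x0p /asboolP x0dom] x0min.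
exists x0.1, (nth false x0.2); split => //; first by rewrite -ltnS ltn_ord.
move=> p g p0 pn pdom.
pose y : T := (Ordinal (pn : (p < n.+1)%N), tup g).
have good_y : good y.
  by apply/andP; split => //; apply/asboolP; rewrite /= (@eq_periodic_ext p _ g p0 (eq_tup g p pn)).
have := x0min y good_y; rewrite /ratio /= /weight.
rewrite (eq_bigr (fun k : 'I_p => (g k : nat))) => [|k _]; last by rewrite (eq_tup g p pn).
rewrite ler_pdivrMr ?ltr0n // mulrAC ler_pdivlMr ?ltr0n //.
by rewrite -!natrM ler_nat.
Qed.

Section Domination.
Context {S : seq nat} {s : nat}.
Hypothesis S_le : forall k, k \in S -> (k <= s)%N.

Lemma dominatedb_local f g (c c' : int) :
  (forall d : int, (`|d| <= s)%N -> f (c + d) = g (c' + d)) ->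
  dominatedb S f c = dominatedb S g c'.
Proof.
move=> eq_fg; rewrite /dominatedb; have := eq_fg 0; rewrite !addr0 => -> //.
congr (_ || _); apply: eq_in_has => k /S_le ks.
by rewrite (eq_fg k%:Z) // (eq_fg (- k%:Z)) ?abszN.
Qed.

(* Points within distance s of either end of the window are exempt, since
   their neighbourhoods leave it. *)
Definition dominated_interior (w : int -> bool) (L : nat) : Prop :=
  forall c : nat, (s <= c)%N -> (c + s < L)%N -> dominatedb S w c%:Z.

Section RepeatedSubword.
Context {w : int -> bool} {L i j : nat}.
Hypotheses (w_dom : dominated_interior w L) (lt_ij : (i < j)%N) (jL : (j + 2 * s <= L)%N).
Hypothesis eq_w : forall k, (k < 2 * s)%N -> w (i + k)%N%:Z = w (j + k)%N%:Z.

Lemma dominated_interior_excise : dominated_interior (excise w i j) (L - (j - i)).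
Proof.
move=> c sc cL; case: (ltnP c (i + s)) => ci.
- rewrite (@dominatedb_local _ w c%:Z c%:Z); first by apply: w_dom => //; lia.
  move=> d ds; rewrite /excise; case: ifP => // /negbT; rewrite -leNgt => icd.
  have [k [cdk ks]] : exists k : nat, c%:Z + d = (i + k)%N%:Z /\ (k < 2 * s)%N.
    by exists (absz (c%:Z + d - i%:Z)%R); split; lia.
  by rewrite cdk eq_w //; congr w; lia.
- rewrite (@dominatedb_local _ w c%:Z (c + (j - i))%N%:Z); first by apply: w_dom; lia.
  by move=> d ds; rewrite /excise ifF; [congr w | ]; lia.
Qed.

(* The two copies of the subword of length 2s make the wrap-around of the
   periodic extension invisible from every point of [i + s, j + s). *)
Lemma dominating_periodic_ext_block :
  dominating S (periodic_ext (j - i) (fun k => w (i + k)%N%:Z)).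
Proof.
set p := (j - i)%N; set g := fun k => w (i + k)%N%:Z.
have p0 : (0 < p)%N by rewrite /p; lia.
have agree (t : nat) : (t < p + 2 * s)%N -> periodic_ext p g t%:Z = w (i + t)%N%:Z.
  elim/ltn_ind: t => t IH tp2s; case: (ltnP t p) => tp; first by rewrite periodic_ext_small.
  rewrite (_ : t%:Z = (t - p)%N%:Z + 1 * p%:Z); last lia.
  rewrite periodic_extDM IH; [|lia|lia].
  by rewrite /g eq_w; [congr w | ]; rewrite /p; lia.
apply/dominatingP => x.
pose r := ((x - s%:Z) %% p%:Z)%Z; pose m := ((x - s%:Z) %/ p%:Z)%Z.
have xsE : x - s%:Z = m * p%:Z + r by apply: divz_eq.
have r0 : 0 <= r by apply: modz_ge0; lia.
have rp : r < p%:Z by apply: ltz_pmod; lia.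
pose t := (s + absz r)%N.
rewrite (@dominatedb_local _ (periodic_ext p g) x t%:Z); last first.
  by move=> d ds; rewrite (_ : x + d = (t%:Z + d) + m * p%:Z) ?periodic_extDM //; lia.
rewrite (@dominatedb_local _ w t%:Z (i + t)%N%:Z); first by apply: w_dom; lia.
move=> d ds; rewrite (_ : t%:Z + d = (absz (t%:Z + d)%R)%:Z); last lia.
by rewrite agree; [congr w | ]; lia.
Qed.

End RepeatedSubword.

Context {p0 c0 : nat}.
Hypothesis c0p0_min : forall p g, (0 < p)%N -> (p <= 2 ^ (2 * s))%N ->
  dominating S (periodic_ext p g) -> (c0 * p <= weight p g * p0)%N.

Lemma window_count_lower_bound L w : dominated_interior w L ->
  (c0 * L <= window_count w L * p0 + c0 * (2 ^ (2 * s) + 2 * s))%N.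
Proof.
elim/ltn_ind: L w => L IH w w_dom.
case: (ltnP L (2 ^ (2 * s) + 2 * s)) => L_small.
  by apply: leq_trans (leq_addl _ _); rewrite leq_mul2l ltnW ?orbT.
have [i [j [ij jn eq_w]]] := repeated_subword s w.
have jL : (j + 2 * s <= L)%N by lia.
have rest := IH (L - (j - i))%N ltac:(lia) _ (dominated_interior_excise w_dom ij jL eq_w).
have block := c0p0_min (j - i)%N _ ltac:(lia) ltac:(lia) (dominating_periodic_ext_block w_dom ij jL eq_w).
rewrite (@window_count_excise w L i j) //; last lia.
move: rest block.
have : (c0 * L = c0 * (L - (j - i)) + c0 * (j - i))%N by rewrite -mulnDr; congr muln; lia.
nia.
Qed.

Lemma count_sym_lower_bound D N : dominating S D ->
  (c0 * (2 * N).+1 <= count_sym D N * p0 + c0 * (2 ^ (2 * s) + 2 * s))%N.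
Proof.
move=> /dominatingP D_dom; apply: (window_count_lower_bound _ (fun x => D (x - N%:Z))).
move=> c _ _; rewrite (@dominatedb_local _ D c%:Z (c%:Z - N%:Z)) //.
by move=> d _; congr D; lia.
Qed.

End Domination.

Lemma le_limn_esup_error (R : realType) (u v : nat -> R) (C : R) : 0 <= C ->
  (forall N, u N <= v N + C / N.+1%:R) ->
  (limn_esup (fun N => (u N)%:E) <= limn_esup (fun N => (v N)%:E))%E.
Proof.
move=> C0 uv; rewrite /limn_esup !limf_esupE.
apply/lee_subgt0Pr => e e0; apply: le_ereal_inf_tmp => y [V [M0 _ VM0] <-].
have Ce0 : 0 <= C / e by rewrite divr_ge0 // ltW.
pose M := maxn M0 (Num.Def.archi_bound (C / e)).
pose W := [set k : nat | (M <= k)%N]%classic.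
rewrite leeBlDr //; apply: (@le_trans _ _ (ereal_sup ((fun N => (u N)%:E) @` W)%classic)).
  by apply: ereal_inf_lbound; exists W => //; exists M.
apply: ge_ereal_sup => z [k Wk <-].
have Vk : V k by apply: VM0; rewrite /= (leq_trans (leq_maxl _ _) Wk).
have err_le : C / k.+1%:R <= e.
  rewrite ler_pdivrMr ?ltr0n //.
  have := archi_boundP Ce0; rewrite ltr_pdivrMr // => Cle.
  apply/ltW/(lt_le_trans Cle); rewrite mulrC ler_wpM2l ?ltW // ltr_nat ltnS.
  exact: leq_trans (leq_maxr M0 _) Wk.
apply: (@le_trans _ _ ((v k)%:E + e%:E)%E).
  by rewrite -EFinD lee_fin (le_trans (uv k)) // lerD2l.
by rewrite leeD2r //; apply: ereal_sup_ubound; exists k.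
Qed.

Lemma density_le_of_count_bounds (R : realType) (D D' : int -> bool) (c p K : nat) :
  (0 < p)%N ->
  (forall N, count_sym D N * p <= c * (2 * N).+1 + c * p)%N ->
  (forall N, c * (2 * N).+1 <= count_sym D' N * p + c * K)%N ->
  (density R D <= density R D')%E.
Proof.
move=> p0 D_ub D'_lb; pose E : R := (c * (K + p))%N%:R.
apply: (@le_limn_esup_error R _ _ (E / p%:R)); first by rewrite divr_ge0.
move=> N; set a := count_sym D N; set b := count_sym D' N; set m := (2 * N).+1.
have ab : (a%:R : R) <= b%:R + E / p%:R.
  rewrite -(@ler_pM2r _ p%:R) ?ltr0n // mulrDl mulfVK ?pnatr_eq0 -?lt0n //.
  by rewrite -!natrM -natrD ler_nat; have := D_ub N; have := D'_lb N; nia.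
have err_le : E / p%:R / m%:R <= E / p%:R / N.+1%:R.
  rewrite ler_wpM2l ?divr_ge0 // lef_pV2 ?posrE ?ltr0n // ler_nat; lia.
apply: le_trans (lerD (lexx _) err_le).
by rewrite -mulrDl ler_wpM2r.
Qed.

Theorem theorem4 (R : realType) (S : seq nat) :
  S != [::] -> all (fun k => (0 < k)%N) S ->
  let s := (\max_(k <- S) k)%N in
  exists (D : int -> bool) (p : nat),
    [/\ dominating S D,
        (0 < p)%N, periodic_set D p, (p <= 2 * s * 2 ^ (2 * s))%N
      & forall D' : int -> bool, dominating S D' ->
          (density R D <= density R D')%E].
Proof.
move=> S_nil S_pos s.
have S_le k : k \in S -> (k <= s)%N by move=> kS; exact: leq_bigmax_seq.
have s_pos : (0 < s)%N.
  have [k kS] : exists k, k \in S.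
    by case: S S_nil {S_pos S_le s} => // k S' _; exists k; rewrite mem_head.
  by have := S_le k kS; have /= := allP S_pos k kS; lia.
have pow_pos : (0 < 2 ^ (2 * s))%N by rewrite expn_gt0.
have [p0 [g0 [p0_pos p0_le D0_dom D0_min]]] := exists_min_periodic_dominating S _ pow_pos.
exists (periodic_ext p0 g0), p0; split => //.
- by move=> x; have := periodic_extDM p0 g0 1 x; rewrite mul1r.
- by apply: leq_trans p0_le _; rewrite leq_pmull // muln_gt0.
move=> D' D'_dom.
apply: (@density_le_of_count_bounds R _ _ (weight p0 g0) p0 (2 ^ (2 * s) + 2 * s) p0_pos) => N.
- exact: window_count_periodic_ext_ub.
- exact: (count_sym_lower_bound S_le D0_min).
Qed.
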